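(* Let $G_1$ be an FC-group (every element has a centraliser of finite index), let $n,m\ge 0$, let $G\le G_1^n$ be a subgroup, let $w(\bar x,\bar y)$ be a group word in the variables $\bar x=(x_1,\dots,x_n)$, $\bar y=(y_1,\dots,y_m)$ and their inverses, and let $\bar g\in G_1^m$ and $c\in G_1$. If the set $X=\{\bar h\in G: w(\bar h,\bar g)=c\}$ is large in $G$, then $w(\bar h,\bar g)=c$ for all $\bar h\in G$.
   Context: $w(\bar x,\bar g)$ induces a function $G\to G_1$ by substitution. A subset $X\subseteq G$ is $k$-large in $G$ if the intersection of any $k$ left translates $\bar a_1X\cap\dots\cap\bar a_kX$ ($\bar a_i\in G$) is non-empty; $X$ is large in $G$ if it is $k$-large for every $k\ge1$. *)

From Stdlib Require List.
From mathcomp Require Import all_boot.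
Set Implicit Arguments.
Unset Strict Implicit.
Unset Printing Implicit Defensive.

Record group := Group {
  carrier :> Type;
  gmul : carrier -> carrier -> carrier;
  ginv : carrier -> carrier;
  gone : carrier;
  gmulA : forall x y z, gmul x (gmul y z) = gmul (gmul x y) z;
  gmul1 : forall x, gmul gone x = x;
  gmulV : forall x, gmul (ginv x) x = gone
}.

Definition centraliser (G1 : group) (x : G1) : G1 -> Prop :=
  fun y => gmul y x = gmul x y.

Definition finite_index (G1 : group) (H : G1 -> Prop) : Prop :=
  exists s : list G1, forall g : G1,
    exists r, List.In r s /\ H (gmul (ginv r) g).

Definition FC_group (G1 : group) : Prop :=
  forall x : G1, finite_index (centraliser x).

Definition pmul (G1 : group) (n : nat) (a b : 'I_n -> G1) : 'I_n -> G1 :=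
  fun i => gmul (a i) (b i).
Definition pinv (G1 : group) (n : nat) (a : 'I_n -> G1) : 'I_n -> G1 :=
  fun i => ginv (a i).
Definition pone (G1 : group) (n : nat) : 'I_n -> G1 := fun _ => gone G1.

Definition is_subgroup (G1 : group) (n : nat) (G : ('I_n -> G1) -> Prop) : Prop :=
  G (@pone G1 n) /\
  (forall a b, G a -> G b -> G (pmul a b)) /\
  (forall a, G a -> G (pinv a)).

(* X (a subset of G) is k-large in G: any k left translates a_1 X, ..., a_k X
   with a_i in G have a common point. (x \in a X iff a^-1 x \in X.) *)
Definition k_large (G1 : group) (n : nat) (G X : ('I_n -> G1) -> Prop) (k : nat) : Prop :=
  forall a : 'I_k -> ('I_n -> G1), (forall i, G (a i)) ->
    exists x : 'I_n -> G1, forall i, X (pmul (pinv (a i)) x).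

Definition large (G1 : group) (n : nat) (G X : ('I_n -> G1) -> Prop) : Prop :=
  forall k, 1 <= k -> k_large G X k.

Inductive word (V : Type) : Type :=
  | WVar of V
  | WOne
  | WMul of word V & word V
  | WInv of word V.
Arguments WOne {V}.

Fixpoint eval_word (G1 : group) (V : Type) (e : V -> G1) (w : word V) : G1 :=
  match w with
  | WVar v => e v
  | WOne => gone G1
  | WMul u v => gmul (eval_word e u) (eval_word e v)
  | WInv u => ginv (eval_word e u)
  end.

Definition eval2 (G1 : group) (n m : nat) (w : word ('I_n + 'I_m))
    (h : 'I_n -> G1) (g : 'I_m -> G1) : G1 :=
  eval_word (fun v => match v with inl i => h i | inr j => g j end) w.

(* The tuples of G1^n whose i-th coordinate centralises a fixed z form a
   subgroup of finite index, because G1 is an FC-group.  Largeness survives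
   intersecting with such a subgroup: to put a point of X inside it, translate
   by representatives (taken in G) of the finitely many cosets that G meets.
   So for h in G there is k in G, commuting coordinatewise with h and g, such
   that hk and k both lie in X.  Then w(hk, g) = w(h, g) w(k, 1) and
   w(k, g) = w(1, g) w(k, 1) both equal c, whence w(h, g) = w(1, g) = c. *)

From Stdlib Require Import Classical FunctionalExtensionality.
From Pilot Require Import Defs.
From mathcomp Require Import all_boot.

Set Implicit Arguments.
Unset Strict Implicit.
Unset Printing Implicit Defensive.

Section GroupTheory.
Variable G1 : group.
Implicit Types x y z : G1.

Lemma mulgV x : gmul x (ginv x) = gone G1.
Proof.
have idem : gmul (gmul x (ginv x)) (gmul x (ginv x)) = gmul x (ginv x).
  by rewrite -gmulA (gmulA (ginv x)) gmulV gmul1.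
by rewrite -[LHS]gmul1 -{1}(gmulV (gmul x (ginv x))) -gmulA idem gmulV.
Qed.

Lemma mulg1 x : gmul x (gone G1) = x.
Proof. by rewrite -(gmulV x) gmulA mulgV gmul1. Qed.

Lemma mulKg x y : gmul (ginv x) (gmul x y) = y.
Proof. by rewrite gmulA gmulV gmul1. Qed.

Lemma mulKVg x y : gmul x (gmul (ginv x) y) = y.
Proof. by rewrite gmulA mulgV gmul1. Qed.

Lemma mulIg z x y : gmul x z = gmul y z -> x = y.
Proof. by move=> e; rewrite -(mulg1 x) -(mulgV z) gmulA e -gmulA mulgV mulg1. Qed.

Lemma invg_uniq x y : gmul x y = gone G1 -> y = ginv x.
Proof. by move=> e; rewrite -(mulKg x y) e mulg1. Qed.

Lemma invgK x : ginv (ginv x) = x.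
Proof. by symmetry; apply: invg_uniq; apply: gmulV. Qed.

Lemma invMg x y : ginv (gmul x y) = gmul (ginv y) (ginv x).
Proof. by symmetry; apply: invg_uniq; rewrite -gmulA mulKVg mulgV. Qed.

Definition commute x y := gmul x y = gmul y x.

Lemma commute_sym x y : commute x y -> commute y x.
Proof. exact: esym. Qed.

Lemma commute1 x : commute x (gone G1).
Proof. by rewrite /commute mulg1 gmul1. Qed.

Lemma commuteM x y z : commute x y -> commute x z -> commute x (gmul y z).
Proof. by rewrite /commute => exy exz; rewrite gmulA exy -gmulA exz gmulA. Qed.

Lemma commuteV x y : commute x y -> commute x (ginv y).
Proof.
rewrite /commute => exy.
by rewrite -[LHS](mulKg y) (gmulA y) -exy -(gmulA x) mulgV mulg1.
Qed.

Definition subgroup (H : G1 -> Prop) :=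
  H (gone G1) /\
  (forall x y, H x -> H y -> H (gmul x y)) /\
  (forall x, H x -> H (ginv x)).

Section Subgroup.
Variables (H : G1 -> Prop) (sH : subgroup H).

Lemma subgroupM x y : H x -> H y -> H (gmul x y).
Proof. by case: sH => _ [HM _]; apply: HM. Qed.

Lemma subgroupV x : H x -> H (ginv x).
Proof. by case: sH => _ [_ HV]; apply: HV. Qed.

Lemma same_left_coset r x y :
  H (gmul (ginv r) x) -> H (gmul (ginv r) y) -> H (gmul (ginv x) y).
Proof.
move=> Hx Hy; have := subgroupM (subgroupV Hx) Hy.
by rewrite invMg invgK -gmulA mulKVg.
Qed.

Lemma coset_reps_in (S : G1 -> Prop) : finite_index H ->
  exists (J : finType) (u : J -> G1),
    (forall j, S (u j)) /\
    forall y, S y -> exists j, H (gmul (ginv (u j)) y).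
Proof.
case=> s covers.
suff [J [u [Su reps]]] : exists (J : finType) (u : J -> G1),
    (forall j, S (u j)) /\
    forall y, S y -> (exists r, List.In r s /\ H (gmul (ginv r) y)) ->
      exists j, H (gmul (ginv (u j)) y).
  by exists J, u; split=> // y Sy; apply: reps Sy (covers y).
elim: s {covers} => [|r s [J [u [Su reps]]]].
  by exists void, (fun v : void => match v with end); split=> [[]|y _ [r []]].
have [[y0 [Sy0 Hy0]]|no_rep] :=
  classic (exists y0, S y0 /\ H (gmul (ginv r) y0)).
- exists (option J), (fun o => if o is Some j then u j else y0).
  split=> [[j|]|y Sy [r' [[<-|in_s] Hy]]] //.
  + by exists None; apply: same_left_coset Hy0 Hy.
  + by have [j Hj] := reps y Sy (ex_intro _ r' (conj in_s Hy)); exists (Some j).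
- exists J, u; split=> // y Sy [r' [[<-|in_s] Hy]].
  + by case: no_rep; exists y.
  + exact: reps y Sy (ex_intro _ r' (conj in_s Hy)).
Qed.

End Subgroup.

Lemma subgroup_centraliser z : subgroup (centraliser z).
Proof.
split; first exact: commute_sym (commute1 z).
split=> [x y zx zy|x zx]; apply: commute_sym.
- exact: commuteM (commute_sym zx) (commute_sym zy).
- exact: commuteV (commute_sym zx).
Qed.

Section LargeWithin.
Variables (G X : G1 -> Prop).

(* For K = True this is largeness of X in G, with the translations inverted. *)
Definition large_within (K : G1 -> Prop) :=
  forall (I : finType) (A : I -> G1), (forall i, G (A i)) ->
    exists2 k, G k /\ K k & forall i, X (gmul (A i) k).

Lemma large_within_sub (K K' : G1 -> Prop) :
  (forall k, K k -> K' k) -> large_within K -> large_within K'.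
Proof.
move=> sKK' LK I A GA; have [k [Gk Kk] Xk] := LK I A GA.
by exists k => //; split=> //; apply: sKK'.
Qed.

Hypothesis sG : subgroup G.

Lemma large_within_meet (K H : G1 -> Prop) :
  subgroup K -> subgroup H -> finite_index H ->
  large_within K -> large_within (fun k => K k /\ H k).
Proof.
move=> sK sH fiH LK I A GA.
have [J [u [GKu reps]]] := coset_reps_in sH (fun y => G y /\ K y) fiH.
have [k [Gk Kk] Xk] := LK (I * J)%type (fun p => gmul (A p.1) (ginv (u p.2)))
  (fun p => subgroupM sG (GA p.1) (subgroupV sG (proj1 (GKu p.2)))).
have [j Hj] := reps k (conj Gk Kk).
exists (gmul (ginv (u j)) k); last by move=> i; rewrite gmulA; apply: Xk (i, j).
split; last split=> //.
- exact: (subgroupM sG (subgroupV sG (proj1 (GKu j))) Gk).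
- exact: (subgroupM sK (subgroupV sK (proj2 (GKu j))) Kk).
Qed.

Lemma large_within_cap (T : finType) (H : T -> G1 -> Prop) :
  (forall t, subgroup (H t)) -> (forall t, finite_index (H t)) ->
  large_within (fun _ => True) -> large_within (fun k => forall t, H t k).
Proof.
move=> sH fiH LT.
suff /(_ (enum T)) : forall s : seq T,
    large_within (fun k => forall t, t \in s -> H t k).
  by apply: large_within_sub => k Hk t; apply: Hk; rewrite mem_enum.
elim=> [|t0 s IHs]; first exact: large_within_sub LT.
have sK : subgroup (fun k => forall t, t \in s -> H t k).
  split; first by move=> t _; case: (sH t).
  split=> [x y Hx Hy t st|x Hx t st].
  - exact: (subgroupM (sH t) (Hx t st) (Hy t st)).
  - exact: (subgroupV (sH t) (Hx t st)).
apply: large_within_sub (large_within_meet sK (sH t0) (fiH t0) IHs).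
by move=> k [Hk Hk0] t; rewrite in_cons => /orP [/eqP -> | /Hk].
Qed.

End LargeWithin.

Section Words.
Variable V : Type.

Lemma commute_eval x (E : V -> G1) (u : word V) :
  (forall v, commute x (E v)) -> commute x (eval_word E u).
Proof.
move=> xE; elim: u => [v||u1 IH1 u2 IH2|u IH] /=.
- exact: xE.
- exact: commute1.
- exact: commuteM.
- exact: commuteV.
Qed.

Lemma eval_wordM (E F : V -> G1) (u : word V) :
  (forall v v', commute (F v) (E v')) ->
  eval_word (fun v => gmul (E v) (F v)) u =
  gmul (eval_word E u) (eval_word F u).
Proof.
move=> FE.
have FuEu u1 u2 : commute (eval_word F u1) (eval_word E u2).
  apply: commute_eval => v'; apply: commute_sym.
  by apply: commute_eval => v; apply: commute_sym.
elim: u => [v||u1 IH1 u2 IH2|u IH] /=.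
- by [].
- by rewrite gmul1.
- by rewrite IH1 IH2 -!gmulA (gmulA (eval_word F u1)) (FuEu u1 u2) -gmulA.
- rewrite IH invMg; apply: commuteV; apply: commute_sym; apply: commuteV.
  exact: commute_sym (FuEu u u).
Qed.

End Words.

End GroupTheory.

Section PowerGroup.
Variables (G1 : group) (n : nat).

Lemma pmulA (a b c : 'I_n -> G1) : pmul a (pmul b c) = pmul (pmul a b) c.
Proof. by apply: functional_extensionality => i; apply: gmulA. Qed.

Lemma pmul1 (a : 'I_n -> G1) : pmul (@pone G1 n) a = a.
Proof. by apply: functional_extensionality => i; apply: gmul1. Qed.

Lemma pmulV (a : 'I_n -> G1) : pmul (pinv a) a = @pone G1 n.
Proof. by apply: functional_extensionality => i; apply: gmulV. Qed.

Definition power_group : group :=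
  @Defs.Group ('I_n -> G1) (@pmul G1 n) (@pinv G1 n) (@pone G1 n) pmulA pmul1 pmulV.

Lemma subgroup_coord (i : 'I_n) (H : G1 -> Prop) :
  subgroup H -> subgroup (G1 := power_group) (fun k => H (k i)).
Proof.
move=> sH; split; first by case: sH.
by split=> [x y|x] /=; [apply: subgroupM | apply: subgroupV].
Qed.

Lemma finite_index_coord (i : 'I_n) (H : G1 -> Prop) :
  finite_index H -> finite_index (G1 := power_group) (fun k => H (k i)).
Proof.
case=> s covers.
pose embed (r : G1) : 'I_n -> G1 := fun j => if j == i then r else gone G1.
exists (List.map embed s) => k; have [r [in_s Hr]] := covers (k i).
by exists (embed r); split; [apply: List.in_map | rewrite /= /pmul /pinv /embed eqxx].
Qed.

Lemma large_within_top (G X : ('I_n -> G1) -> Prop) :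
  is_subgroup G -> (forall x, X x -> G x) -> large G X ->
  large_within (G1 := power_group) G X (fun _ => True).
Proof.
move=> sG XG LX I A GA.
have {}sG : subgroup (G1 := power_group) G := sG.
pose B (o : option I) : power_group := if o is Some i then A i else gone _.
have GB o : G (B o) by case: o => [i|]; [exact: GA | case: sG].
have [x Xx] : exists x : power_group,
    forall j : 'I_#|{: option I}|, X (gmul (ginv (ginv (B (enum_val j)))) x).
  have card_gt0 : 0 < #|{: option I}| by rewrite card_option.
  exact: (LX _ card_gt0 _ (fun j => subgroupV sG (GB (enum_val j)))).
have Gx : G x.
  by apply: XG; have := Xx (enum_rank None); rewrite enum_rankK invgK gmul1.
exists x => // i; have := Xx (enum_rank (Some i)).
by rewrite enum_rankK invgK.
Qed.

End PowerGroup.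

Definition assign (G1 : group) (n m : nat) (h : 'I_n -> G1) (g : 'I_m -> G1) :
  'I_n + 'I_m -> G1 := fun v => match v with inl i => h i | inr j => g j end.

Lemma eval2_pmul (G1 : group) (n m : nat) (w : word ('I_n + 'I_m))
    (h k : 'I_n -> G1) (g : 'I_m -> G1) :
  (forall i v, commute (k i) (assign h g v)) ->
  eval2 w (pmul h k) g = gmul (eval2 w h g) (eval2 w k (fun _ => gone G1)).
Proof.
move=> kE; rewrite /eval2 -eval_wordM.
- by congr eval_word; apply: functional_extensionality => -[i|j] //=; rewrite mulg1.
- by move=> [i|j] v /=; [apply: kE | apply: commute_sym (commute1 _)].
Qed.

Lemma eval2_const_of_large (G1 : group) (n m : nat)
    (G X : ('I_n -> G1) -> Prop) (w : word ('I_n + 'I_m)) (g : 'I_m -> G1)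
    (c : G1) :
  FC_group G1 -> is_subgroup G ->
  (forall x, X x -> G x /\ eval2 w x g = c) -> large G X ->
  forall h, G h -> eval2 w h g = eval2 w (@pone G1 n) g.
Proof.
move=> FC sG Xfibre LX h Gh.
have GA (b : bool) : G (if b then h else @pone G1 n) by case: b => //; case: sG.
pose C (p : 'I_n * ('I_n + 'I_m)) (k : 'I_n -> G1) :=
  centraliser (assign h g p.2) (k p.1).
have [k [_ Ck] Xk] :=
  large_within_cap (sG : subgroup (G1 := power_group G1 n) G) (H := C)
    (fun p => subgroup_coord p.1 (subgroup_centraliser _))
    (fun p => finite_index_coord p.1 (FC _))
    (large_within_top sG (fun x Xx => proj1 (Xfibre x Xx)) LX) GA.
have [[_ e_hk] [_ e_k]] := (Xfibre _ (Xk true), Xfibre _ (Xk false)).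
apply: (@mulIg _ (eval2 w k (fun _ => gone G1))).
rewrite -!eval2_pmul; first exact: etrans e_hk (esym e_k).
- by move=> i [j|j]; [exact: commute1 | exact: Ck (i, inr j)].
- by move=> i v; exact: Ck (i, v).
Qed.

Theorem theorem3p2 (G1 : group) (n m : nat) (G : ('I_n -> G1) -> Prop)
    (w : word ('I_n + 'I_m)) (g : 'I_m -> G1) (c : G1) :
  FC_group G1 ->
  is_subgroup G ->
  large G (fun h => G h /\ eval2 w h g = c) ->
  forall h, G h -> eval2 w h g = c.
Proof.
move=> FC sG LX h Gh.
have w_const := eval2_const_of_large FC sG (fun x => id) LX.
have [x Xx] := LX 1 isT (fun _ => @pone G1 n) (fun _ => proj1 sG).
by have [Gy <-] := Xx ord0; rewrite (w_const h Gh) (w_const _ Gy).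
Qed.
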